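(* Let $\xi_1,\xi_2,\dots$ be i.i.d. standard Gaussian random variables. There are constants $\tilde c_3,\tilde c_4>0$ such that for all $L>0$ and all $N\in\mathbb{N}$ with $L/2\le N\le2L$, $$\tilde c_3L\le-\log\mathbb{E}\,e^{-L\max_{i=1,\dots,N}|\xi_i|}\le\tilde c_4L.$$ *)

From HB Require Import structures.
From mathcomp Require Import all_boot all_order all_algebra.
From mathcomp Require Import finmap.
From mathcomp Require Import all_classical all_reals all_analysis.
Set Implicit Arguments. Unset Strict Implicit. Unset Printing Implicit Defensive.
Import Order.TTheory GRing.Theory Num.Theory.
Local Open Scope classical_set_scope.
Local Open Scope ring_scope.

Definition mutually_independent_RVs {d} {T : measurableType d} {R : realType}
    (P : probability T R) (X : nat -> {RV P >-> R}) : Prop :=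
  forall (J : {fset nat}) (B : nat -> set R),
    (forall j, j \in J -> measurable (B j)) ->
    P (\bigcap_(j in [set` J]) (X j @^-1` B j)) =
    (\prod_(j <- J) P (X j @^-1` B j))%E.

Definition standard_gaussian_RV {d} {T : measurableType d} {R : realType}
    (P : probability T R) (X : {RV P >-> R}) : Prop :=
  forall A : set R, measurable A -> distribution P X A = normal_prob 0 1 A.

(* max_{i = 1..N} |xi_i| (indices shifted to 0..N-1) *)
Definition max_abs {d} {T : measurableType d} {R : realType}
    (P : probability T R) (xi : nat -> {RV P >-> R}) (N : nat) (w : T) : R :=
  \big[Num.max/0]_(i < N) `|xi i w|.

From HB Require Import structures.
From mathcomp Require Import all_boot all_order all_algebra finmap.
From mathcomp Require Import all_classical all_reals all_analysis.
From mathcomp Require Import measurable_realfun ring lra.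
Import Order.TTheory GRing.Theory Num.Theory.
Local Open Scope classical_set_scope.
Local Open Scope ring_scope.

(* Let p = P(|xi| <= 1), so 0 < p < 1. By independence the event
   {max_(i<N) |xi_i| <= 1} has probability p^N; on it exp(-L max) >= exp(-L), and
   off it exp(-L max) <= exp(-L). Hence, writing x = exp(-L),
     x p^N <= E exp(-L max) <= f := x + (1 - x) p^N.
   For L/2 <= N <= 2L the lower bound gives -ln E <= (1 - 2 ln p) L. For the
   upper bound, -ln f >= 1 - f >= (1 - x)(1 - p) >= (1 - p) L / (1 + L) handles
   small L, and f <= x + p^(L/2) <= 2 exp(-a L) with a = min(1, -ln p / 2)
   handles large L. *)

Lemma ln_le_subr1 {R : realType} (x : R) : 0 < x -> ln x <= x - 1.
Proof.
by move=> x0; have := @le_ln1Dx R (x - 1); rewrite [1 + _]addrC subrK; apply; lra.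
Qed.

Section exponential_mixture.
Context {R : realType} {p : R}.
Hypotheses (p_gt0 : 0 < p) (p_lt1 : p < 1).

Let lnp_lt0 : ln p < 0. Proof. by rewrite ln_lt0 // p_gt0. Qed.

Lemma neg_ln_le_of_ge (L e : R) (N : nat) : N%:R <= 2 * L ->
  expR (- L) * p ^+ N <= e -> - ln e <= (1 - 2 * ln p) * L.
Proof.
move=> NL he.
have lnN : ln (expR (- L) * p ^+ N) <= ln e.
  by rewrite ler_ln ?posrE ?(lt_le_trans _ he) ?mulr_gt0 ?expR_gt0 ?exprn_gt0.
move: lnN; rewrite lnM ?posrE ?expR_gt0 ?exprn_gt0 // expRK lnXn // -mulr_natr.
have : 2 * L * ln p <= N%:R * ln p by rewrite ler_wnM2r // ltW.
lra.
Qed.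

Local Notation mix L N := (expR (- L) + (1 - expR (- L)) * p ^+ N).

Lemma neg_ln_mix_ge_small (L : R) (N : nat) : 0 <= L -> (0 < N)%N ->
  L / (1 + L) * (1 - p) <= - ln (mix L N).
Proof.
move=> L0 N0.
set x := expR (- L); set y := p ^+ N.
have x0 : 0 < x by exact: expR_gt0.
have y0 : 0 < y by exact: exprn_gt0.
have xle1 : x <= 1 by rewrite /x expR_le1 oppr_le0.
have x1 : x * (1 + L) <= 1.
  by rewrite /x expRN mulrC ler_pdivrMr ?expR_gt0 // mul1r expR_ge1Dx.
have yp : y <= p by rewrite -[leRHS]expr1 ler_wiXn2l // ltW.
have Lx : L / (1 + L) <= 1 - x.
  rewrite ler_pdivrMr; last lra.
  rewrite mulrBl mul1r; lra.
have f0 : 0 < x + (1 - x) * y by nra.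
have fE : x + (1 - x) * y - 1 = - ((1 - x) * (1 - y)) by ring.
have := ln_le_subr1 _ f0.
have : L / (1 + L) * (1 - p) <= (1 - x) * (1 - y).
  by rewrite ler_pM ?divr_ge0 ?lerB ?subr_ge0 // ?ltW //; lra.
lra.
Qed.

Let a := Num.min 1 (- ln p / 2).

Let a_gt0 : 0 < a.
Proof. by rewrite lt_min ltr01 /= divr_gt0 // oppr_gt0. Qed.

Lemma neg_ln_mix_ge_large (L : R) (N : nat) : 0 <= L -> L / 2 <= N%:R ->
  a * L - ln 2 <= - ln (mix L N).
Proof.
move=> L0 NL.
set x := expR (- L); set y := p ^+ N.
have a1 : a <= 1 by rewrite ge_min lexx.
have a2 : a <= - ln p / 2 by rewrite ge_min lexx orbT.
have x0 : 0 < x by exact: expR_gt0.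
have xle1 : x <= 1 by rewrite /x expR_le1 oppr_le0.
have y0 : 0 < y by exact: exprn_gt0.
have xa : x <= expR (- (a * L)) by rewrite ler_expR; nra.
have ya : y <= expR (- (a * L)).
  rewrite /y -[p]lnK ?posrE // -expRM_natl ler_expR.
  have : N%:R * ln p <= L / 2 * ln p by rewrite ler_wnM2r // ltW.
  nra.
have f0 : 0 < x + (1 - x) * y by nra.
have f2 : x + (1 - x) * y <= 2 * expR (- (a * L)) by nra.
have := f2; rewrite -ler_ln ?posrE ?mulr_gt0 ?expR_gt0 // lnM ?posrE ?expR_gt0 //.
rewrite expRK; lra.
Qed.

Lemma neg_ln_mix_ge_linear : exists2 c : R, 0 < c &
  forall (L e : R) (N : nat), 0 < L -> L / 2 <= N%:R ->
    0 < e -> e <= mix L N -> c * L <= - ln e.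
Proof.
(* Beyond [L1] we have [a * L - ln 2 >= a * L / 2]; below it the small-[L]
   bound has slope at least [(1 - p) / (1 + L1)]. *)
pose L1 := 2 * ln 2 / a.
have ln2 : 0 < ln (2 : R) by rewrite ln_gt0 // ltr1n.
have L1_gt0 : 0 < L1 by rewrite divr_gt0 ?mulr_gt0.
have aL1 : a * L1 = 2 * ln 2 by rewrite /L1 mulrC divfK // gt_eqF.
exists (Num.min (a / 2) ((1 - p) / (1 + L1))).
  by rewrite lt_min !divr_gt0 ?subr_gt0 // addr_gt0.
move=> L e N L0 NL e0 emix.
have N0 : (0 < N)%N.
  by rewrite lt0n; apply: contraTneq NL => ->; rewrite -ltNge; lra.
apply: (@le_trans _ _ (- ln (mix L N))); last first.
  by rewrite lerN2 ler_ln ?posrE // (lt_le_trans e0).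
set c := Num.min _ _.
have [LL1|L1L] := lerP L L1.
  have cL : c * L <= (1 - p) / (1 + L1) * L by rewrite ler_pM2r // ge_min lexx orbT.
  have : (1 - p) / (1 + L1) * L <= L / (1 + L) * (1 - p).
    rewrite mulrAC [X in _ <= X]mulrAC [(1 - p) * L]mulrC.
    apply: ler_wpM2l; first by rewrite mulr_ge0 ?subr_ge0 ?ltW.
    by rewrite lef_pV2 ?posrE ?lerD2l // addr_gt0.
  have := neg_ln_mix_ge_small L N (ltW L0) N0.
  lra.
have cL : c * L <= a / 2 * L by rewrite ler_pM2r // ge_min lexx.
have : a * L1 <= a * L by rewrite ler_pM2l // ltW.
have := neg_ln_mix_ge_large L N (ltW L0) NL.
lra.
Qed.

End exponential_mixture.

Section standard_normal.
Variable R : realType.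

Lemma normal_prob_fin_num (m s : R) (A : set R) : measurable A ->
  normal_prob m s A \is a fin_num.
Proof.
move=> mA; rewrite ge0_fin_numE ?measure_ge0 //.
exact: le_lt_trans (probability_le1 (normal_prob m s) mA) (ltry 1).
Qed.

Lemma normal_prob01_itv_gt0 (a b : R) : a < b -> (0 < normal_prob 0 1 `[a, b])%E.
Proof.
move=> ab.
pose c := normal_peak 1 * expR (- (a ^+ 2 + b ^+ 2) / 2).
have c0 : 0 < c by rewrite mulr_gt0 ?expR_gt0 // normal_peak_gt0 // oner_neq0.
apply: (@lt_le_trans _ _ (\int[lebesgue_measure]_(x in `[a, b]) c%:E)%E).
  have := lebesgue_measure_itv `[a, b]; rewrite /= lte_fin ab => lebE.
  rewrite integral_cst // [X in (_ * X)%E]lebE -EFinB -EFinM lte_fin.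
  by rewrite mulr_gt0 // subr_gt0.
apply: ge0_le_integral => //=.
- by move=> x _; rewrite lee_fin ltW.
- by apply/measurable_EFinP; apply: measurable_funTS; exact: measurable_normal_pdf.
move=> x; rewrite in_itv /= => /andP[ax xb]; rewrite lee_fin.
rewrite /normal_pdf oner_eq0 /c /normal_fun ler_pM2l ?normal_peak_gt0 ?oner_neq0 //.
rewrite ler_expR subr0 expr1n !mulNr lerN2 ler_pM2r //.
have [x0|x0] := lerP 0 x; nra.
Qed.

Lemma normal_prob01_itvN11_gt0_lt1 :
  0 < fine (normal_prob (0 : R) 1 `[-1, 1]) < 1.
Proof.
have sub : `[-1, 1] `<=` ~` (`[2, 3] : set R).
  by move=> x /=; rewrite !in_itv /= => /andP[_ x1] /andP[x2 _]; lra.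
have fin11 := normal_prob_fin_num 0 1 _ (measurable_itv `[-1, 1]).
have fin23 := normal_prob_fin_num 0 1 _ (measurable_itv `[2, 3]).
have pos11 : (0 < normal_prob (0 : R) 1 `[(-1)%R, 1%R])%E.
  by apply: normal_prob01_itv_gt0; lra.
have pos23 : (0 < normal_prob (0 : R) 1 `[2%R, 3%R])%E.
  by apply: normal_prob01_itv_gt0; lra.
have le11 : (normal_prob (0 : R) 1 `[(-1)%R, 1%R]
             <= 1 - normal_prob (0 : R) 1 `[2%R, 3%R])%E.
  rewrite -probability_setC; last exact: measurable_itv.
  by apply: le_measure => //; rewrite inE;
    [|apply: measurableC]; exact: measurable_itv.
rewrite -(fineK fin11) -(fineK fin23) in pos11 pos23 le11.
rewrite -EFinB !lte_fin lee_fin in pos11 pos23 le11.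
by apply/andP; split; lra.
Qed.

End standard_normal.

Lemma measurable_bigmaxr {d} {T : measurableType d} {R : realType} (I : Type)
    (s : seq I) (Pr : pred I) (D : set T) (f : I -> T -> R) :
  (forall i, measurable_fun D (f i)) ->
  measurable_fun D (fun x => \big[Num.max/0]_(i <- s | Pr i) f i x).
Proof.
move=> mf; elim: s => [|i s IH].
  by under eq_fun do rewrite big_nil; exact: measurable_cst.
under eq_fun do rewrite big_cons; case: (Pr i) => //.
exact: measurable_maxr.
Qed.

Lemma expR_neg_mul_indic_bounds {R : realType} (L m : R) (b : bool) :
  0 <= L -> 0 <= m -> b = (m <= 1) ->
  expR (- L) * b%:R <= expR (- (L * m)) <= expR (- L) + (1 - expR (- L)) * b%:R.
Proof.
move=> L0 m0 ->; have k1 : expR (- L) <= 1 by rewrite expR_le1 oppr_le0.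
have [m1|m1] := lerP m 1; rewrite ?mulr1 ?mulr0 ?addr0 ?subrKC.
- by rewrite ler_expR lerN2 ler_piMr // expR_le1 oppr_le0 mulr_ge0.
- by rewrite expR_ge0 ler_expR lerN2 ler_peMr // ltW.
Qed.

Section iid_family.
Context {d : measure_display} {T : measurableType d} {R : realType}
  {P : probability T R}.

Lemma iid_prob_all_in {X : nat -> {RV P >-> R}} {B : set R} {q : R} (N : nat) :
  mutually_independent_RVs X -> measurable B ->
  (forall j, P (X j @^-1` B) = q%:E) ->
  P [set w | forall i, (i < N)%N -> B (X i w)] = (q ^+ N)%:E.
Proof.
move=> indX mB PXB; pose J := seq_fset tt (iota 0 N).
have -> : [set w | forall i, (i < N)%N -> B (X i w)] =
    \bigcap_(j in [set` J]) (X j @^-1` B).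
  apply/seteqP; split => w /= h j.
    by rewrite /= seq_fsetE mem_iota add0n => /andP[_ jN]; exact: h.
  by move=> jN; apply: h; rewrite /= seq_fsetE mem_iota add0n.
rewrite indX // (eq_bigr (fun=> q%:E)) // prodEFin.
rewrite big_const_seq count_predT iter_mulr_1.
by rewrite (perm_size (seq_fset_perm _ _)) undup_id ?iota_uniq // size_iota.
Qed.

Lemma max_abs_ge0 (xi : nat -> {RV P >-> R}) N w : 0 <= max_abs xi N w.
Proof. exact: bigmax_ge_id. Qed.

Lemma max_abs_le (xi : nat -> {RV P >-> R}) N w (c : R) : 0 <= c ->
  (max_abs xi N w <= c) <-> (forall i, (i < N)%N -> `|xi i w| <= c).
Proof.
move=> c0; split => [/bigmax_leP[_ h] i iN | h]; first exact: (h (Ordinal iN)).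
by apply/bigmax_leP; split => // i _; exact: h.
Qed.

Lemma measurable_max_abs (xi : nat -> {RV P >-> R}) N :
  measurable_fun setT (max_abs xi N).
Proof.
apply: measurable_bigmaxr => i.
by apply: measurableT_comp => //; exact: measurable_funP.
Qed.

Lemma expectation_expR_neg_bounds {M : T -> R} {L q : R} :
  measurable_fun setT M -> (forall w, 0 <= M w) -> 0 <= L ->
  P [set w | M w <= 1] = q%:E ->
  expR (- L) * q <= fine 'E_P[fun w => expR (- (L * M w))]
                <= expR (- L) + (1 - expR (- L)) * q.
Proof.
move=> mM M0 L0 PA; set A := [set w | M w <= 1] in PA *.
have mA : measurable A.
  rewrite (_ : A = M @^-1` `]-oo, 1]); last first.
    by apply/seteqP; split => w /=; rewrite in_itv.
  by rewrite -[_ @^-1` _]setTI; apply: mM => //; exact: measurable_itv.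
have mg : measurable_fun setT (fun w => expR (- (L * M w))).
  apply: measurableT_comp => //; apply: measurableT_comp => //.
  exact: measurable_funM.
have g_bounds w : expR (- L) * \1_A w <= expR (- (L * M w))
                  <= expR (- L) + (1 - expR (- L)) * \1_A w.
  rewrite indicE; apply: expR_neg_mul_indic_bounds => //.
  by apply/idP/idP => [/set_mem|/mem_set].
have int_indic (c : R) : 0 <= c -> (\int[P]_w (c * \1_A w)%:E)%E = (c * q)%:E.
  move=> c0; under eq_integral do rewrite EFinM.
  rewrite ge0_integralZl_EFin //; last first.
    by apply/measurable_EFinP; exact: measurable_indic.
  by rewrite integral_indic // setIT EFinM; congr (_ * _)%E; exact: PA.
have lb : ((expR (- L) * q)%:E <= \int[P]_w (expR (- (L * M w)))%:E)%E.
  rewrite -int_indic ?expR_ge0 //; apply: ge0_le_integral.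
  - exact: measurableT.
  - by move=> w _; rewrite lee_fin mulr_ge0 ?expR_ge0.
  - apply/measurable_EFinP; apply: measurable_funM => //; exact: measurable_indic.
  - exact/measurable_EFinP.
  - by move=> w _; rewrite lee_fin; case/andP: (g_bounds w).
have ub : (\int[P]_w (expR (- (L * M w)))%:E <=
           (expR (- L) + (1 - expR (- L)) * q)%:E)%E.
  have k1 : expR (- L) <= 1 by rewrite expR_le1 oppr_le0.
  rewrite EFinD -int_indic ?subr_ge0 // -[X in (X + _)%E]mule1.
  have mind : measurable_fun setT (fun w => (1 - expR (- L)) * \1_A w).
    by apply: measurable_funM => //; exact: measurable_indic.
  rewrite -(probability_setT P) -integral_cst //= -ge0_integralD //=; last 2 first.
  - by move=> w _; rewrite lee_fin mulr_ge0 ?subr_ge0 ?indic_ge0.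
  - exact/measurable_EFinP.
  under [X in (_ <= X)%E]eq_integral do rewrite -EFinD.
  apply: ge0_le_integral => //=.
  - exact/measurable_EFinP.
  - by apply/measurable_EFinP; apply: measurable_funD.
  - by move=> w _; rewrite lee_fin; case/andP: (g_bounds w).
rewrite unlock; move: lb ub; case: (\int[P]_w _)%E => [r||] //=.
by rewrite !lee_fin => -> ->.
Qed.

End iid_family.
Theorem lemma9 (R : realType) (d : measure_display) (T : measurableType d)
    (P : probability T R) (xi : nat -> {RV P >-> R})
    (hind : mutually_independent_RVs xi)
    (hgauss : forall i, standard_gaussian_RV (xi i)) :
  exists c3 c4 : R, 0 < c3 /\ 0 < c4 /\
    forall (L : R) (N : nat), 0 < L -> L / 2 <= N%:R -> N%:R <= 2 * L ->
      c3 * L <= - ln (fine ('E_P[fun w => expR (- (L * max_abs xi N w))])%E)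
      /\ - ln (fine ('E_P[fun w => expR (- (L * max_abs xi N w))])%E) <= c4 * L.
Proof.
have /andP[p_gt0 p_lt1] := normal_prob01_itvN11_gt0_lt1 R.
set p := fine _ in p_gt0 p_lt1.
have [c c_gt0 c_le] := neg_ln_mix_ge_linear p_gt0 p_lt1.
have lnp_lt0 : ln p < 0 by rewrite ln_lt0 // p_gt0.
exists c, (1 - 2 * ln p); split=> //; split=> [|L N L_gt0 NL NL2]; first lra.
have PB j : P (xi j @^-1` `[-1, 1]) = p%:E.
  have := hgauss j _ (measurable_itv `[-1, 1]).
  rewrite /distribution /pushforward => ->.
  by rewrite /p fineK // normal_prob_fin_num.
have PA : P [set w | max_abs xi N w <= 1] = (p ^+ N)%:E.
  rewrite -(iid_prob_all_in N hind (measurable_itv _) PB).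
  have -> // : [set w | max_abs xi N w <= 1] =
      [set w | forall i, (i < N)%N -> xi i w \in `[-1, 1]].
  apply/seteqP; split=> w /=; rewrite max_abs_le //.
    by move=> h i /h; rewrite in_itv /= -ler_norml.
  by move=> h i /h; rewrite in_itv /= ler_norml.
have /andP[lb ub] := expectation_expR_neg_bounds (measurable_max_abs xi N)
  (max_abs_ge0 xi N) (ltW L_gt0) PA.
have e_gt0 : 0 < fine 'E_P[fun w => expR (- (L * max_abs xi N w))].
  by apply: lt_le_trans lb; rewrite mulr_gt0 ?expR_gt0 ?exprn_gt0.
split; first exact: c_le ub.
exact: neg_ln_le_of_ge lb.
Qed.
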